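(* Let $d>d_{\min}$, $n\in\mathbb{N}_+$, $\epsilon\in[0,1]$, and let $\mathcal{S}$ be any $(n,d,\epsilon,\mathcal{A})$ sampling (the case $k=1$). Let $(W,T,H)$ have joint law $P^{\mathcal{A}}_{H|T}P^{\mathcal{S}}_{T|W}P_W$. Then $$\epsilon \;\ge\; \sup_{\gamma\ge 0}\Big\{\mathbb{P}\big[\jmath_W(W,H,d,\mathcal{A})\ge bn+\gamma\big]-e^{-\gamma}\Big\}.$$
   Context: Framework. $\mathcal{W}$ is a countable set and $W\sim P_W$ on $\mathcal{W}$. For $k\in\mathbb{N}_+$, $W^k=(W_1,\dots,W_k)$ has i.i.d. components with law $P_W$. $\mathcal{H}$ is a countable set of hypotheses. Each training sample is described by a fixed number $b\in\mathbb{N}_+$ of bits. $\mathcal{T}_n$ denotes the set of all training datasets of size $n$, and $|\mathcal{T}_n|=2^{bn}$. A sampling strategy $\mathcal{S}$ is a Markov kernel $P^{\mathcal{S}}_{T|W^k}$ from $\mathcal{W}^k$ to training datasets. A randomized learning algorithm $\mathcal{A}$ is a fixed Markov kernel $P^{\mathcal{A}}_{H|T}$ from training datasets to $\mathcal{H}$. The hypothesis is $H=\mathcal{A}(\mathcal{S}(W^k))$, so that $W^k\to T\to H$ is a Markov chain. The distortion $\mathsf{d}:\mathcal{W}\times\mathcal{H}\to[0,\infty)$ is bounded (Assumption (I)), and $\mathsf{d}(w^k;h):=\frac1k\sum_{i=1}^k\mathsf{d}(w_i;h)$. All logarithms are natural. $(k,n,d,\epsilon,\mathcal{A})$ sampling: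 a sampling strategy $\mathcal{S}$ such that $|\mathcal{S}(W^k)|=n$ almost surely and $\mathbb{P}[\mathsf{d}(W^k;\mathcal{A}(\mathcal{S}(W^k)))>d]\le\epsilon$. For $k=1$ it is called an $(n,d,\epsilon,\mathcal{A})$ sampling. Rate-distortion quantity (for $k=1$): $$\mathbb{R}_W(d,\mathcal{A}):=\inf_{P^{\mathcal{S}}_{T|W}:\ \mathbb{E}_{P^{\mathcal{A}}_{H|T}P^{\mathcal{S}}_{T|W}P_W}[\mathsf{d}(W;H)]\le d}\ \mathbb{I}(W;H).$$ $d_{\min}:=\inf\{d:\mathbb{R}_W(d,\mathcal{A})<\infty\}$ is assumed to exist and be finite (Assumption (II)). Assumption (III): there is an optimal sampling strategy $\mathcal{S}^*$, with kernel $P^{\mathcal{S}^*}_{T|W}$, attaining the infimum and satisfying $\mathbb{E}[\mathsf{d}(W;\mathcal{A}(\mathcal{S}^*(W)))]=d$. $H^{\mathcal{S}^*}_{\mathcal{A}}$ denotes the hypothesis with joint law $P^{\mathcal{A},\mathcal{S}^*}_{H|W}P_W$, where $P^{\mathcal{A},\mathcal{S}^*}_{H|W}(h|w)=\sum_t P^{\mathcal{A}}_{H|T}(h|t)P^{\mathcal{S}^*}_{T|W}(t|w)$. Information density: $\iota_{W;H^{\mathcal{S}^*}_{\mathcal{A}}}(w;h):=\log\frac{\mathrm{d}P_{WH}}{\mathrm{d}(P_W\times P_H)}(w,h)$, computed under this joint law. $\lambda^*_{\mathcal{A}}(d):=-\frac{\mathrm{d}\mathbb{R}_W(d,\mathcal{A})}{\mathrm{d}d}>0$.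 The $\mathcal{A}$-specified $d$-tilted information is $$\jmath_W(w,h,d,\mathcal{A}):=\iota_{W;H^{\mathcal{S}^*}_{\mathcal{A}}}(w;h)+\lambda^*_{\mathcal{A}}(d)\big(\mathsf{d}(w;h)-d\big).$$ *)

From HB Require Import structures.
From mathcomp Require Import all_boot all_order all_algebra.
From mathcomp Require Import all_classical all_reals all_analysis.
Set Implicit Arguments. Unset Strict Implicit. Unset Printing Implicit Defensive.
Import Order.TTheory GRing.Theory Num.Theory.
Local Open Scope classical_set_scope.
Local Open Scope ring_scope.
Local Open Scope ereal_scope.

(* Training samples are b-bit strings; a training dataset is a finite
   sequence of samples.  Datasets of size n are those with [size t = n];
   there are exactly 2^(b n) of them. *)
Definition Dataset (b : nat) := seq (b.-tuple bool).

Section Defs.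
Variable R : realType.

Definition is_pmf (T : countType) (p : T -> R) : Prop :=
  (forall t, (0 <= p t)%R) /\ \esum_(t in [set: T]) (p t)%:E = 1.

Definition is_kernel (X Y : countType) (K : X -> Y -> R) : Prop :=
  forall x, is_pmf (K x).

Variables (W H : countType) (b : nat).
Variables (PW : W -> R) (A : Dataset b -> H -> R) (dist : W -> H -> R).

Definition compK (S : W -> Dataset b -> R) (w : W) (h : H) : R :=
  fine (\esum_(t in [set: Dataset b]) (S w t * A t h)%:E).

Definition jointWH (S : W -> Dataset b -> R) (w : W) (h : H) : R :=
  (PW w * compK S w h)%R.

Definition margH (S : W -> Dataset b -> R) (h : H) : R :=
  fine (\esum_(w in [set: W]) (jointWH S w h)%:E).

Definition probWH (S : W -> Dataset b -> R) (E : set (W * H)) : \bar R :=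
  \esum_(x in E) (jointWH S x.1 x.2)%:E.

Definition exp_dist (S : W -> Dataset b -> R) : \bar R :=
  \esum_(x in [set: W * H]) (jointWH S x.1 x.2 * dist x.1 x.2)%:E.

(* nonnegative KL summand  p log(p/q) - p + q  (with 0 log 0 = 0, p log(p/0) = +oo);
   summing it for two pmfs gives D(P||Q) in [0,+oo]. *)
Definition kl_term (p q : R) : \bar R :=
  if p == 0%R then q%:E
  else if q == 0%R then +oo
  else (p * ln (p / q) - p + q)%:E.

Definition mutinf (S : W -> Dataset b -> R) : \bar R :=
  \esum_(x in [set: W * H]) kl_term (jointWH S x.1 x.2) (PW x.1 * margH S x.2).

Definition RD (dd : R) : \bar R :=
  ereal_inf [set mutinf S | S in
     [set S | is_kernel S /\ exp_dist S <= dd%:E]].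

Definition dmin : R := inf [set x : R | RD x < +oo].

Definition is_sampling (n : nat) (dd eps : R) (S : W -> Dataset b -> R) : Prop :=
  is_kernel S /\
  (forall w t, S w t != 0%R -> size t = n) /\
  probWH S [set x | (dd < dist x.1 x.2)%R] <= eps%:E.

Definition optimal_sampling (dd : R) (Sstar : W -> Dataset b -> R) : Prop :=
  is_kernel Sstar /\ exp_dist Sstar = dd%:E /\ mutinf Sstar = RD dd.

(* information density of (W, H^{S*}_A); log of the Radon-Nikodym derivative
   p/q, taken to be 0 (hence log = -oo) off the support of P_{WH}. *)
Definition info_density (Sstar : W -> Dataset b -> R) (w : W) (h : H) : \bar R :=
  let p := jointWH Sstar w h in
  let q := (PW w * margH Sstar h)%R in
  if ((0 < p) && (0 < q))%R then (ln (p / q))%:E else -oo.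

Definition tilted_info (Sstar : W -> Dataset b -> R) (lam dd : R) (w : W) (h : H)
  : \bar R :=
  info_density Sstar w h + (lam * (dist w h - dd))%:E.

End Defs.

From HB Require Import structures.
From mathcomp Require Import all_boot all_order all_algebra.
From mathcomp Require Import all_classical all_reals all_analysis.

Set Implicit Arguments.
Unset Strict Implicit.
Unset Printing Implicit Defensive.
Import Order.TTheory GRing.Theory Num.Theory.
Local Open Scope classical_set_scope.
Local Open Scope ring_scope.
Local Open Scope ereal_scope.

(** A change of measure.  Split the event [{j(W,H) >= bn + g}] according to
    whether [d(W;H) > d]; the first part has probability at most [eps].  On
    the second part the distortion term of [j] is nonpositive, so the
    information density exceeds [bn + g], i.e. [P_W(w) <= e^(-bn-g) P*(w|h)]
    with [P*(w|h)] the conditional law of [W] given [H] under the optimal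
    strategy.  Since [S] only outputs datasets of size [n],
    [P_S(w,h) <= P_W(w) a(h)] with [a(h) = sum_(|t| = n) A(h|t)].  Summing
    [e^(-bn-g) a(h) P*(w|h)] over [w] and then over [h] gives at most
    [e^(-bn-g) 2^(bn) <= e^(-g)]. *)

Section ExtendedSums.
Variable R : realType.

Lemma esum_setT_fin (T : finType) (f : T -> \bar R) :
  (forall x, 0 <= f x) -> \esum_(x in [set: T]) f x = \sum_(x : T) f x.
Proof.
move=> f0; rewrite esum_fset; [|exact: finite_finset|by []].
rewrite (fsbigE (enum T)) //.
- by under eq_bigl do rewrite in_setT; rewrite big_enum.
- exact: enum_uniq.
- by move=> i _; rewrite mem_enum.
Qed.

Lemma esumZl_le (T : choiceType) (I : set T) (f : T -> R) (k : R) :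
  (0 <= k)%R ->
  \esum_(x in I) (k * f x)%:E <= k%:E * \esum_(x in I) (f x)%:E.
Proof.
move=> k0; apply: ge_ereal_sup => _ [X [finX XI] <-].
rewrite fsumEFin// -mulr_fsumr EFinM -fsumEFin//.
by apply: lee_wpmul2l; rewrite ?lee_fin//; apply: ereal_sup_ubound; exists X.
Qed.

(* Normalising by [fine] of the total mass is harmless when that mass is [0]
   or [+oo]: the division by [0] then yields the zero function. *)
Lemma esum_normalized_le1 (T : choiceType) (I : set T) (f : T -> R) :
  (forall x, 0 <= f x)%R ->
  \esum_(x in I) (f x / fine (\esum_(y in I) (f y)%:E))%:E <= 1.
Proof.
move=> f0; set m := \esum_(y in I) (f y)%:E.
have m0 : 0 <= m by apply: esum_ge0 => y _; rewrite lee_fin.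
have [m_fin|] := boolP (m \is a fin_num); last first.
  rewrite ge0_fin_numE // -leNgt leye_eq => /eqP ->.
  by rewrite esum1 // => x _; rewrite /= invr0 mulr0.
have [->|mN0] := eqVneq (fine m) 0%R.
  by rewrite esum1 // => x _; rewrite invr0 mulr0.
under eq_esum do rewrite mulrC.
apply: le_trans (esumZl_le _ _ _) _; last first.
  by rewrite -/m -{2}(fineK m_fin) -EFinM mulVf.
by rewrite invr_ge0 fine_ge0.
Qed.

Lemma esum_cond_weight_le (W H : choiceType) (p : W -> H -> R) (f : H -> R) :
  (forall w h, 0 <= p w h)%R -> (forall h, 0 <= f h)%R ->
  \esum_(x in [set: W * H])
     (f x.2 * (p x.1 x.2 / fine (\esum_(w in [set: W]) (p w x.2)%:E)))%:E
  <= \esum_(h in [set: H]) (f h)%:E.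
Proof.
move=> p0 f0; pose m h := fine (\esum_(w in [set: W]) (p w h)%:E).
have m0 h : (0 <= m h)%R.
  by apply: fine_ge0; apply: esum_ge0 => w _; rewrite lee_fin.
rewrite (reindex_esum [set: H * W] [set: W * H] (fun y => (y.2, y.1)));
  last first.
  split=> [y _ //|[x1 x2] [y1 y2] _ _ /= [-> ->] //|[w h] _].
  by exists (h, w).
have -> : [set: H * W] = [set: H] `*`` (fun=> [set: W]) by apply/seteqP.
rewrite -(esum_esum (a := fun h w => (f h * (p w h / m h))%:E)); last first.
  by move=> h w _ _; rewrite lee_fin mulr_ge0 ?divr_ge0.
apply: le_esum => h _; apply: le_trans (esumZl_le _ _ (f0 h)) _.
by rewrite -[leRHS]mule1 lee_wpmul2l ?lee_fin // esum_normalized_le1.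
Qed.

End ExtendedSums.

Lemma pmf_le1 (R : realType) (T : countType) (p : T -> R) t :
  is_pmf p -> (p t <= 1)%R.
Proof.
case=> p0 p1.
have : (p t)%:E <= \esum_(x in [set: T]) (p x)%:E.
  apply: esum_ge; exists [set t]; first by split; [exact: finite_set1|].
  by rewrite fsbig_set1.
by rewrite p1 lee_fin.
Qed.

Lemma pow2_le_expR (R : realType) (k : nat) : ((2 ^ k)%:R <= expR k%:R :> R)%R.
Proof.
rewrite natrX -[X in expR X]mulr1 expRM_natl.
apply: lerXn2r; rewrite ?nnegrE ?expR_ge0 //.
by have := expR_ge1Dx (1 : R); rewrite (_ : 1 + 1 = 2%:R)%R.
Qed.

Section SizedSampling.
Variables (R : realType) (W H : countType) (b : nat).
Variables (A : Dataset b -> H -> R) (n : nat).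
Hypothesis kA : is_kernel A.

Definition sized_mass (h : H) : R :=
  \sum_(u : n.-tuple (b.-tuple bool)) A (tval u) h.

Lemma sized_mass_ge0 h : (0 <= sized_mass h)%R.
Proof. by apply: sumr_ge0 => u _; case: (kA u). Qed.

Lemma esum_sized_mass :
  \esum_(h in [set: H]) (sized_mass h)%:E = ((2 ^ (b * n))%:R)%:E.
Proof.
under eq_esum do rewrite /sized_mass -sumEFin.
rewrite esum_sum; last by move=> h u _ _; rewrite lee_fin; case: (kA (tval u)).
under eq_bigr do rewrite (proj2 (kA _)).
by rewrite sumEFin sumr_const !card_tuple card_bool expnM.
Qed.

Lemma compK_le_sized_mass (S : W -> Dataset b -> R) w :
  is_kernel S -> (forall t, S w t != 0%R -> size t = n) ->
  forall h, (compK A S w h <= sized_mass h)%R.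
Proof.
move=> kS hsz h.
have A0 t : (0 <= A t h)%R by case: (kA t).
have S0 t : (0 <= S w t)%R by case: (kS w).
pose Tn := [set t : Dataset b | size t = n].
have Tn_tval : Tn = (@tval n _) @` setT.
  apply/seteqP; split=> [t /= /eqP st|_ [u _ <-]]; last exact: size_tuple.
  by exists (Tuple st).
suff : \esum_(t in [set: Dataset b]) (S w t * A t h)%:E <= (sized_mass h)%:E.
  rewrite /compK; case: (esum _ _) => [r|_|_]; rewrite ?lee_fin //;
  exact: sized_mass_ge0.
rewrite (eq_esum (b := fun t => if t \in Tn then (S w t * A t h)%:E else 0));
  last first.
  move=> t _; case: ifPn => // /negP tn.
  have [->|/hsz st] := eqVneq (S w t) 0%R; first by rewrite mul0r.
  by case: tn; rewrite inE.
rewrite -esum_mkcond Tn_tval esum_image; last by move=> x y _ _; exact: val_inj.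
rewrite esum_setT_fin; last by move=> u; rewrite lee_fin mulr_ge0.
rewrite -sumEFin lee_sum // => u _; rewrite lee_fin ler_piMl //.
exact/pmf_le1/kS.
Qed.

End SizedSampling.

Section ChangeOfMeasure.
Variables (R : realType) (W H : countType) (b : nat).
Variables (PW : W -> R) (A : Dataset b -> H -> R) (dist : W -> H -> R).
Hypotheses (PW0 : forall w, (0 <= PW w)%R) (kA : is_kernel A).

Lemma jointWH_ge0 (S : W -> Dataset b -> R) :
  is_kernel S -> forall w h, (0 <= jointWH PW A S w h)%R.
Proof.
move=> kS w h; rewrite mulr_ge0 //; apply: fine_ge0; apply: esum_ge0 => t _.
by rewrite lee_fin mulr_ge0 //; [case: (kS w)|case: (kA t)].
Qed.

Lemma probWH_le (S : W -> Dataset b -> R) (E F : set (W * H)) :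
  is_kernel S -> E `<=` F -> probWH PW A S E <= probWH PW A S F.
Proof.
move=> kS EF; rewrite /probWH -(setIidr EF) esum_mkcondr.
by apply: le_esum => x _; case: ifPn => // _; rewrite lee_fin jointWH_ge0.
Qed.

(* Off the support of [P_{WH}] the information density is [-oo], so the
   hypothesis forces [p > 0] and [P_W(w) P_H(h) > 0]. *)
Lemma tilted_info_ge_bound (Sstar : W -> Dataset b -> R) (lam d x : R) w h :
  (0 <= lam)%R -> (dist w h <= d)%R ->
  x%:E <= tilted_info PW A dist Sstar lam d w h ->
  (PW w <= expR (- x) * (jointWH PW A Sstar w h / margH PW A Sstar h))%R.
Proof.
move=> lam0 hd; rewrite /tilted_info /info_density.
set p := jointWH _ _ _ w h; set m := margH _ _ _ h.
case: ifPn => [/andP[p0 q0]|//]; rewrite -EFinD lee_fin => hx.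
have hln : (x <= ln (p / (PW w * m)))%R.
  apply: le_trans hx _; rewrite gerDl.
  by apply: mulr_ge0_le0 => //; rewrite subr_le0.
have PWp : (0 < PW w)%R.
  by rewrite lt0r PW0 andbT; apply: contraTneq q0 => ->; rewrite mul0r ltxx.
have mp : (0 < m)%R by rewrite -(pmulr_rgt0 _ PWp).
have ex : (expR x <= p / (PW w * m))%R.
  by rewrite -ler_ln ?posrE ?expR_gt0 ?divr_gt0 // expRK.
rewrite expRN ler_pdivlMl ?expR_gt0 // ler_pdivlMr // -mulrA.
by rewrite -ler_pdivlMr ?mulr_gt0.
Qed.

Lemma probWH_tilted_le (S Sstar : W -> Dataset b -> R) (lam d x : R) n :
  (0 <= lam)%R -> is_kernel S -> is_kernel Sstar ->
  (forall w t, S w t != 0%R -> size t = n) ->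
  probWH PW A S ([set y | x%:E <= tilted_info PW A dist Sstar lam d y.1 y.2]
                 `&` [set y | (dist y.1 y.2 <= d)%R])
  <= (expR (- x) * (2 ^ (b * n))%:R)%:E.
Proof.
move=> lam0 kS kSs hsz.
pose c h := (expR (- x) * sized_mass A n h)%R.
have c0 h : (0 <= c h)%R by rewrite mulr_ge0 ?expR_ge0 ?sized_mass_ge0.
have p0 := jointWH_ge0 kSs.
apply: (@le_trans _ _ (\esum_(h in [set: H]) (c h)%:E)); last first.
  apply: le_trans (esumZl_le _ _ (expR_ge0 _)) _.
  by rewrite esum_sized_mass.
apply: le_trans (esum_cond_weight_le p0 c0).
rewrite /probWH esum_mkcond; apply: le_esum => -[w h] _ /=.
case: ifPn => [/[!inE] -[/= hx hd]|_]; last first.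
  rewrite lee_fin mulr_ge0 ?divr_ge0 ?fine_ge0 ?esum_ge0 // => w' _.
  by rewrite lee_fin.
have joint_le := compK_le_sized_mass kA kS (hsz w) h.
rewrite lee_fin /jointWH /c.
apply: le_trans (ler_wpM2l (PW0 w) joint_le) _.
rewrite mulrAC; apply: ler_wpM2r; first exact: sized_mass_ge0.
exact: tilted_info_ge_bound hx.
Qed.

End ChangeOfMeasure.

Theorem theorem1 (R : realType) (W H : countType) (b : nat)
  (PW : W -> R) (A : Dataset b -> H -> R) (dist : W -> H -> R)
  (Sstar : W -> Dataset b -> R) (lam d : R) (n : nat) (eps : R)
  (S : W -> Dataset b -> R) :
  (0 < b)%N ->
  is_pmf PW ->
  is_kernel A ->
  (exists M : R, forall w h, (0 <= dist w h <= M)%R) ->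
  [set x : R | RD PW A dist x < +oo] !=set0 ->
  (dmin PW A dist < d)%R ->
  optimal_sampling PW A dist d Sstar ->
  is_derive d 1%R (fun x => fine (RD PW A dist x)) (- lam)%R ->
  (0 < lam)%R ->
  (0 < n)%N ->
  (0 <= eps <= 1)%R ->
  is_sampling PW A dist n d eps S ->
  ereal_sup [set probWH PW A S
                 [set x | ((b * n)%:R + gamma)%:E
                          <= tilted_info PW A dist Sstar lam d x.1 x.2]
                 - (expR (- gamma))%:E
             | gamma in [set gamma : R | (0 <= gamma)%R]]
    <= eps%:E.
Proof.
move=> _ [PW0 _] kA _ _ _ [kSs _] _ lam0 _ _ [kS [hsz hD]].
apply: ge_ereal_sup => _ [g _ <-]; rewrite leeBlDr //.
rewrite {1}/probWH (esumID [set x | (d < dist x.1 x.2)%R]); last first.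
  by move=> x _; rewrite lee_fin (jointWH_ge0 PW0 kA kS).
apply: leeD; first by apply: le_trans hD; apply: probWH_le => // x [].
have tilted_le := probWH_tilted_le dist PW0 kA d ((b * n)%:R + g)
  (ltW lam0) kS kSs hsz.
apply: le_trans (le_trans (probWH_le PW0 kA kS _) tilted_le) _.
  by move=> x [hx /negP]; rewrite -leNgt.
rewrite lee_fin opprD expRD mulrAC ler_piMl ?expR_ge0 //.
by rewrite expRN mulrC ler_pdivrMr ?expR_gt0 // mul1r pow2_le_expR.
Qed.
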